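(* Let $n\geq 2$. Let $H$ be the $n!\times(n-1)^2$ $0/1$ matrix with rows indexed by $S(n)$, columns indexed by ordered pairs $(i,j)$ with $i,j\in\{1,\dots,n-1\}$, and $(\pi,(i,j))$-entry equal to $1$ iff $\pi(i)=j$. Let $N$ be the submatrix of $H$ formed by the rows indexed by derangements of $\{1,\dots,n\}$, and let $W$ be the submatrix of $H$ formed by the columns indexed by the pairs $(i,i)$, $i\in\{1,\dots,n-1\}$. If $y\in\mathbb{R}^{(n-1)^2}$ satisfies $Ny=0$, then $Hy$ lies in the column space of $W$.
   Context: A derangement of $\{1,\dots,n\}$ is a permutation with no fixed points; $S(n)$ is the symmetric group on $\{1,\dots,n\}$. *)

From HB Require Import structures.
From mathcomp Require Import all_boot all_order all_algebra all_fingroup.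
Set Implicit Arguments. Unset Strict Implicit. Unset Printing Implicit Defensive.
Import GRing.Theory Num.Theory.
Local Open Scope ring_scope.

(* Points 1..n of the paper are the elements 0..n-1 of 'I_n; the subset
   {1,..,n-1} is 'I_n.-1, embedded in 'I_n by widen_ord. *)
Definition emb (n : nat) (i : 'I_n.-1) : 'I_n := widen_ord (leq_pred n) i.

Definition derangement (n : nat) (s : {perm 'I_n}) : bool := [forall i, s i != i].
Definition derangements (n : nat) : {set {perm 'I_n}} := [set s | derangement s].

Definition Hmx (R : nzRingType) (n : nat)
  : 'M[R]_(#|{: {perm 'I_n}}|, #|{: 'I_n.-1 * 'I_n.-1}|) :=
  \matrix_(r, c)
    ((enum_val r : {perm 'I_n}) (emb (enum_val c).1) == emb (enum_val c).2)%:R.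

Definition Nmx (R : nzRingType) (n : nat)
  : 'M[R]_(#|derangements n|, #|{: 'I_n.-1 * 'I_n.-1}|) :=
  \matrix_(r, c) Hmx R n (enum_rank (enum_val r : {perm 'I_n})) c.

Definition Wmx (R : nzRingType) (n : nat)
  : 'M[R]_(#|{: {perm 'I_n}}|, n.-1) :=
  \matrix_(r, k) Hmx R n r (enum_rank (k, k)).

From HB Require Import structures.
From mathcomp Require Import all_boot all_order all_algebra all_fingroup.
Import GRing.Theory Num.Theory.
Local Open Scope ring_scope.

(* Extend y to a function Y on pairs of points of {1,..,n} by
   zero on the row and the column of the last point L = n.  The entry of H y
   at a permutation s is then the weight  sum_k Y(k, s k)  of s, and N y = 0
   says that every derangement has weight zero.
   1. Exchange relation: for four distinct points x, y, u, v there are two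
      derangements, differing by the transposition (x u), that map x, u to
      y, v resp. to v, y; comparing their weights gives
      Y(x,y) + Y(u,v) = Y(x,v) + Y(u,y).
   2. Taking one of the four points to be L (where Y vanishes), every
      off-diagonal entry of Y away from L is constant along rows and columns,
      hence constant; a derangement has exactly n - 2 arcs avoiding L, so its
      weight is (n - 2) times that constant, which must therefore be 0.  For
      n = 3 one derangement avoids L on exactly one arc, giving the same.
   3. With all off-diagonal entries zero, the weight of s only involves the
      diagonal entries Y(i,i) at fixed points i of s: this is W z for the
      vector z of diagonal entries of y. *)

Definition fixpoint_free {T : finType} (s : {perm T}) : bool :=
  [forall i, s i != i].

Definition perm_weight {V : zmodType} {T : finType} (Y : T -> T -> V)
    (s : {perm T}) : V :=
  \sum_k Y k (s k).

Lemma next_neq (T : eqType) (p : seq T) (x : T) :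
  uniq p -> (1 < size p)%N -> x \in p -> next p x != x.
Proof.
move=> Up sp xp; rewrite next_nth xp.
case: p Up sp xp => [//|y0 p'] Up sp xp.
set i := index x (y0 :: p').
have ilt : (i < size (y0 :: p'))%N by rewrite index_mem.
have nth_i : nth y0 (y0 :: p') i = x by rewrite nth_index.
rewrite -[X in _ != X]nth_i.
case: (ltnP i (size p')) => hi.
  have -> : nth y0 p' i = nth y0 (y0 :: p') i.+1 by [].
  by rewrite nth_uniq //= ?ltnS // eqn_leq ltnn.
rewrite nth_default //.
have -> : y0 = nth y0 (y0 :: p') 0 by [].
rewrite nth_uniq //; apply/eqP => i0; move: hi; rewrite -i0.
by move: sp => /=; case: (size p').
Qed.

Lemma cycle_derangement {T : finType} {l : seq T} :
  uniq l -> (1 < size l)%N ->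
  exists s : {perm T},
    fixpoint_free s /\ s =1 next (l ++ [seq k <- enum T | k \notin l]).
Proof.
move=> Ul sl; set p := l ++ _.
have Up : uniq p.
  rewrite cat_uniq Ul filter_uniq ?enum_uniq // andbT /=.
  by apply/hasPn => k; rewrite mem_filter => /andP[].
have memp k : k \in p by rewrite mem_cat mem_filter mem_enum andbT orbN.
exists (perm (can_inj (prev_next Up))); split; last exact: permE.
apply/forallP => k; rewrite permE next_neq //.
by rewrite size_cat (leq_trans sl) // leq_addr.
Qed.

Section ExchangeRelation.

Context {V : zmodType} {T : finType} {Y : T -> T -> V}.

Hypothesis derangement_weight0 :
  forall s : {perm T}, fixpoint_free s -> perm_weight Y s = 0.

Lemma perm_weight_split2 (s : {perm T}) (a b : T) : a != b ->
  perm_weight Y s =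
  Y a (s a) + Y b (s b) + \sum_(k | (k != a) && (k != b)) Y k (s k).
Proof.
move=> ab; rewrite /perm_weight (bigD1 a) //= (bigD1 b) /=; last by rewrite eq_sym.
by rewrite addrA.
Qed.

Lemma exchange {x y u v : T} :
  x != y -> x != u -> x != v -> y != u -> y != v -> u != v ->
  Y x y + Y u v = Y x v + Y u y.
Proof.
move=> xy xu xv yu yv uv.
have Ul : uniq [:: x; y; u; v] by rewrite /= !inE !negb_or xy xu xv yu yv uv.
have [s [s_der s_next]] := cycle_derangement Ul isT.
have sx : s x = y by rewrite s_next /= eqxx.
have su : s u = v.
  by rewrite s_next /= ![u == _]eq_sym (negbTE xu) (negbTE yu) eqxx.
set t := (tperm x u * s)%g.
have tx : t x = v by rewrite permM tpermL.
have tu : t u = y by rewrite permM tpermR.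
have t_der : fixpoint_free t.
  apply/forallP => k.
  have [->|kx] := eqVneq k x; first by rewrite tx eq_sym.
  have [->|ku] := eqVneq k u; first by rewrite tu.
  by rewrite permM tpermD ?(forallP s_der) // eq_sym.
have t_rest : \sum_(k | (k != x) && (k != u)) Y k (t k) =
              \sum_(k | (k != x) && (k != u)) Y k (s k).
  by apply: eq_bigr => k /andP[kx ku]; rewrite permM tpermD // eq_sym.
have := derangement_weight0 _ s_der.
rewrite (perm_weight_split2 _ _ _ xu) sx su => Ws.
have := derangement_weight0 _ t_der.
rewrite (perm_weight_split2 _ _ _ xu) tx tu => Wt.
apply: (addIr (\sum_(k | (k != x) && (k != u)) Y k (s k))).
by rewrite Ws -t_rest Wt.
Qed.

End ExchangeRelation.

Section AbsorbingPoint.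

Context {R : numDomainType} {T : finType} (L : T) (Y : T -> T -> R).

Hypotheses (Y_row0 : forall l, Y L l = 0) (Y_col0 : forall k, Y k L = 0).
Hypothesis derangement_weight0 :
  forall s : {perm T}, fixpoint_free s -> perm_weight Y s = 0.

(* Exchange with u = L: off-diagonal entries away from L are constant along
   rows. *)
Lemma row_const {x y v} : x != y -> x != v -> y != v ->
  x != L -> y != L -> v != L -> Y x y = Y x v.
Proof.
move=> xy xv yv xL yL vL; have Lv : L != v by rewrite eq_sym.
by have := exchange derangement_weight0 xy xL xv yL yv Lv; rewrite !Y_row0 !addr0.
Qed.

(* Exchange with v = L: they are also constant along columns. *)
Lemma col_const {x y u} : x != y -> x != u -> y != u ->
  x != L -> y != L -> u != L -> Y x y = Y u y.
Proof.
move=> xy xu yu xL yL uL.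
by have := exchange derangement_weight0 xy xu xL yu yL uL; rewrite !Y_col0 addr0 add0r.
Qed.

Definition inner_arcs (s : {perm T}) : {set T} :=
  [set k | (k != L) && (s k != L)].

Lemma weight_inner_arcs (s : {perm T}) :
  perm_weight Y s = \sum_(k in inner_arcs s) Y k (s k).
Proof.
rewrite /perm_weight [RHS]big_mkcond /=; apply: eq_bigr => k _; rewrite inE.
have [->|kL] := eqVneq k L; first by rewrite Y_row0.
by have [->|skL] := eqVneq (s k) L; first by rewrite Y_col0.
Qed.

(* A derangement has exactly #|T| - 2 arcs avoiding L: all but the arcs
   leaving L and entering L, which are distinct. *)
Lemma card_inner_arcs (s : {perm T}) :
  fixpoint_free s -> #|inner_arcs s| = (#|T| - 2)%N.
Proof.
move=> s_der; have := cardsC (inner_arcs s).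
have -> : ~: inner_arcs s = [set L; (s^-1)%g L].
  by apply/setP => k; rewrite !inE negb_and !negbK (canF_eq (permK s)).
rewrite cards2; have -> : L != (s^-1)%g L.
  by apply/eqP => E; have := forallP s_der L; rewrite {1}E permKV eqxx.
by move=> <-; rewrite addnK.
Qed.

(* Step 2, when T has at least four points: all off-diagonal entries of Y
   away from L are equal, by moving along rows and columns. *)
Lemma offdiag_const : (3 < #|T|)%N -> forall a b c d,
  a != b -> c != d -> a != L -> b != L -> c != L -> d != L -> Y a b = Y c d.
Proof.
move=> bigT a b c d ab cd aL bL cL dL.
have third : exists e, [&& e != a, e != b & e != L].
  case: (pickP [pred e | [&& e != a, e != b & e != L]]) => [e He|none].
    by exists e.
  have : (#|T| <= 3)%N.
    apply: leq_trans (card_size [:: a; b; L]).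
    apply/subset_leq_card/subsetP => k _; move: (none k) => /=; rewrite !inE.
    by case: (k == a); case: (k == b); case: (k == L).
  by rewrite leqNgt bigT.
have [da|da] := eqVneq d a.
  subst d; have [bc|bc] := eqVneq b c.
    subst c; have [e /and3P[ea eb eL]] := third.
    rewrite (col_const (u:=e)) //; try by rewrite eq_sym.
    rewrite (row_const (v:=a)) //; try by rewrite eq_sym.
    by rewrite (col_const (u:=b)) //; rewrite eq_sym.
  rewrite (col_const (u:=c)) //; try by rewrite eq_sym.
  by rewrite (row_const (v:=a)) //; rewrite eq_sym.
have -> : Y a b = Y a d.
  by have [->//|bd] := eqVneq b d; rewrite (row_const (v:=d)) // eq_sym.
by have [->//|ca] := eqVneq c a; rewrite (col_const (u:=c)) // eq_sym.
Qed.

Lemma offdiag_vanish p q : p != q -> p != L -> q != L -> Y p q = 0.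
Proof.
move=> pq pL qL.
have U3 : uniq [:: p; q; L] by rewrite /= !inE !negb_or pq pL qL.
have T3 : (3 <= #|T|)%N.
  by rewrite -[3%N]/(size [:: p; q; L]) -(card_uniqP U3) max_card.
have [bigT|smallT] := ltnP 3 #|T|.
  (* A derangement has weight (#|T| - 2) * Y p q, with #|T| - 2 > 0. *)
  have Upq : uniq [:: p; q] by rewrite /= inE pq.
  have [s [s_der _]] := cycle_derangement Upq isT.
  have := derangement_weight0 _ s_der; rewrite weight_inner_arcs.
  rewrite (eq_bigr (fun=> Y p q)) => [|k]; last first.
    rewrite inE => /andP[kL skL].
    by apply: offdiag_const; rewrite // eq_sym (forallP s_der k).
  rewrite sumr_const card_inner_arcs // => /eqP.
  by rewrite mulrn_eq0 subn_eq0 leqNgt (ltnW bigT) => /eqP.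
(* #|T| = 3: the derangement p -> q -> L -> p has p -> q as only inner arc. *)
have [s [s_der s_next]] := cycle_derangement U3 isT.
have sp : s p = q by rewrite s_next /= eqxx.
have : #|inner_arcs s| == 1%N.
  by rewrite card_inner_arcs // eqn_leq leq_subLR smallT subn_gt0.
case/cards1P => z inner_z.
have : p \in inner_arcs s by rewrite inE pL sp qL.
rewrite inner_z inE => /eqP pz; subst z.
have := derangement_weight0 _ s_der.
by rewrite weight_inner_arcs inner_z big_set1 sp.
Qed.

End AbsorbingPoint.

Section ExtensionByZero.

Context {R : nzRingType} {m : nat}.

Lemma emb_inj : injective (@emb m.+1).
Proof. by move=> i j /(congr1 val) /= /val_inj. Qed.

Lemma emb_neq_max (i : 'I_m) : @emb m.+1 i != ord_max.
Proof. by rewrite -val_eqE /= neq_ltn ltn_ord. Qed.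

Definition extend0 (f : 'I_m * 'I_m -> R) (k l : 'I_m.+1) : R :=
  \sum_(c : 'I_m * 'I_m) ((k == @emb m.+1 c.1) && (l == @emb m.+1 c.2))%:R * f c.

Variable f : 'I_m * 'I_m -> R.

Lemma extend0_emb (i j : 'I_m) : extend0 f (@emb m.+1 i) (@emb m.+1 j) = f (i, j).
Proof.
rewrite /extend0 (bigD1 (i, j)) //= !eqxx mul1r big1 ?addr0 // => -[k l] /= ne.
by rewrite !(inj_eq emb_inj) -[_ && _]/((i, j) == (k, l)) eq_sym (negbTE ne) mul0r.
Qed.

Lemma extend0_row0 l : extend0 f ord_max l = 0.
Proof. by apply: big1 => c _; rewrite eq_sym (negbTE (emb_neq_max _)) mul0r. Qed.

Lemma extend0_col0 k : extend0 f k ord_max = 0.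
Proof.
by apply: big1 => c _; rewrite [ord_max == _]eq_sym (negbTE (emb_neq_max _)) andbF mul0r.
Qed.

Lemma perm_weight_extend0 (s : {perm 'I_m.+1}) :
  perm_weight (extend0 f) s =
  \sum_(i : 'I_m) \sum_(j : 'I_m) (s (@emb m.+1 i) == @emb m.+1 j)%:R * f (i, j).
Proof.
rewrite pair_bigA /perm_weight /extend0 exchange_big; apply: eq_bigr => -[i j] _ /=.
rewrite (bigD1 (@emb m.+1 i)) //= eqxx /= big1 ?addr0 // => k /negbTE ->.
by rewrite mul0r.
Qed.

End ExtensionByZero.

Lemma mulHmxE (R : nzRingType) (n p : nat) (y : 'M[R]_(_, p)) r j :
  (Hmx R n *m y) r j =
  \sum_(a : 'I_n.-1) \sum_(b : 'I_n.-1)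
     ((enum_val r : {perm 'I_n}) (emb a) == emb b)%:R * y (enum_rank (a, b)) j.
Proof.
rewrite pair_bigA mxE (reindex (@enum_rank _)) /=.
  by apply: eq_bigr => -[a b] _; rewrite mxE enum_rankK.
by apply: onW_bij; exact: enum_rank_bij.
Qed.

Lemma mulNmxE (R : nzRingType) (n p : nat) (y : 'M[R]_(_, p)) (s : {perm 'I_n})
    (s_der : s \in derangements n) j :
  (Nmx R n *m y) (enum_rank_in s_der s) j = (Hmx R n *m y) (enum_rank s) j.
Proof.
rewrite !mxE; apply: eq_bigr => c _.
by rewrite !mxE (enum_rankK_in s_der s_der) !enum_rankK.
Qed.

Lemma mulWmxE (R : nzRingType) (n p : nat) (z : 'M[R]_(n.-1, p)) r j :
  (Wmx R n *m z) r j =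
  \sum_(a : 'I_n.-1) ((enum_val r : {perm 'I_n}) (emb a) == emb a)%:R * z a j.
Proof. by rewrite mxE; apply: eq_bigr => a _; rewrite !mxE enum_rankK. Qed.

Theorem lemma11 (R : realFieldType) (n : nat) (hn : (2 <= n)%N)
  (y : 'cV[R]_(#|{: 'I_n.-1 * 'I_n.-1}|)) :
  Nmx R n *m y = 0 -> exists z : 'cV[R]_(n.-1), Hmx R n *m y = Wmx R n *m z.
Proof.
case: n hn y => [//|m] _ y Ny0.
pose f (c : 'I_m * 'I_m) := y (enum_rank c) 0.
have weight0 (s : {perm 'I_m.+1}) :
    fixpoint_free s -> perm_weight (extend0 f) s = 0.
  move=> s_der; have s_in : s \in derangements m.+1 by rewrite inE.
  move/matrixP: Ny0 => /(_ (enum_rank_in s_in s) 0).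
  by rewrite mulNmxE mulHmxE enum_rankK mxE perm_weight_extend0.
have offdiag0 i j : i != j -> y (enum_rank (i, j)) 0 = 0.
  move=> ij; rewrite -[LHS]/(f (i, j)) -extend0_emb.
  by apply: (offdiag_vanish _ _ (extend0_row0 f) (extend0_col0 f) weight0);
    rewrite ?(inj_eq emb_inj) ?emb_neq_max.
(* Step 3: only the diagonal of y survives in H y. *)
exists (\col_k f (k, k)); apply/matrixP => r j.
rewrite ord1 mulHmxE mulWmxE; apply: eq_bigr => i _.
rewrite (bigD1 i) //= big1 ?addr0 ?mxE // => k ki.
by rewrite offdiag0 ?mulr0 // eq_sym.
Qed.
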